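(* Let $(\Theta,D)$ be a matrix scheme. If the projection of preference of consequences in $(\Theta,D)$ is unique, then it coincides with domination on $D$.
   Context: A preference relation on a set $X$ is a binary relation $\prec$ on $X$ that is asymmetric ($x\prec y \Rightarrow$ not $y\prec x$) and negatively transitive (not $x\prec y$ and not $y\prec z$ $\Rightarrow$ not $x\prec z$). A matrix scheme is a pair $(\Theta,D)$ where $\Theta$ is an arbitrary nonempty set and $D$ is a set of real-valued functions on $\Theta$. Domination on $D$ is the relation $\prec$ defined by: $d_1\prec d_2$ iff $d_1(\theta)\le d_2(\theta)$ for all $\theta\in\Theta$ and $d_1(\theta^* )<d_2(\theta^* )$ for some $\theta^*\in\Theta$. A projection of preference of consequences in $(\Theta,D)$ is a preference relation $\prec^P$ on $D$ such that $d_1\prec d_2\Rightarrow d_1\prec^P d_2$ for all $d_1,d_2\in D$, where $\prec$ is domination. *)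

From Stdlib Require Export Reals.
Open Scope R_scope.

Definition elt {Theta : Type} (D : (Theta -> R) -> Prop) : Type :=
  { d : Theta -> R | D d }.

Definition preference_relation {X : Type} (r : X -> X -> Prop) : Prop :=
  (forall x y, r x y -> ~ r y x) /\
  (forall x y z, ~ r x y -> ~ r y z -> ~ r x z).

Definition dominates {Theta : Type} {D : (Theta -> R) -> Prop}
  (d1 d2 : elt D) : Prop :=
  (forall t : Theta, proj1_sig d1 t <= proj1_sig d2 t) /\
  (exists t : Theta, proj1_sig d1 t < proj1_sig d2 t).

Definition is_projection {Theta : Type} {D : (Theta -> R) -> Prop}
  (P : elt D -> elt D -> Prop) : Prop :=
  preference_relation P /\
  (forall d1 d2 : elt D, dominates d1 d2 -> P d1 d2).

(* Let P be the unique projection on D.  Domination is always contained in P,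
   so only the converse inclusion needs proof; suppose P d1 d2.

   - Every coordinate weakly increases from d1 to d2.  Otherwise
     d2 t0 < d1 t0 for some t0; refining P lexicographically by the key
     d |-> d t0 (compare at t0 first, break ties with P) yields another
     preference relation that still contains domination, i.e. another
     projection.  It prefers d1 to d2, so by uniqueness P d2 d1, which
     contradicts the asymmetry of P.
   - Some coordinate strictly increases.  Otherwise d1 and d2 coincide as
     functions, hence as elements of D, and P d1 d1 contradicts asymmetry. *)

From Stdlib Require Import Reals Lra Classical FunctionalExtensionality ProofIrrelevance.

Lemma preference_irrefl {X : Type} (r : X -> X -> Prop) :
  preference_relation r -> forall x, ~ r x x.
Proof.
  intros [Hasym _] x Hxx.
  exact (Hasym x x Hxx Hxx).
Qed.

Section LexicographicRefinement.

Variable X : Type.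
Variable key : X -> R.
Variable r : X -> X -> Prop.

Definition lex_refine (x y : X) : Prop :=
  key x < key y \/ (key x = key y /\ r x y).

Lemma not_lex_refine x y :
  ~ lex_refine x y <-> key y <= key x /\ (key x = key y -> ~ r x y).
Proof.
  unfold lex_refine; split.
  - intros Hn; split.
    + apply Rnot_lt_le; intro Hlt; apply Hn; left; exact Hlt.
    + intros Heq Hr; apply Hn; right; split; assumption.
  - intros [Hle Htie] [Hlt | [Heq Hr]].
    + lra.
    + exact (Htie Heq Hr).
Qed.

Lemma lex_refine_preference :
  preference_relation r -> preference_relation lex_refine.
Proof.
  intros [Hasym Hneg]; split.
  - intros x y [Hxy | [Exy Rxy]] [Hyx | [Eyx Ryx]]; try lra.
    exact (Hasym x y Rxy Ryx).
  - intros x y z Hxy Hyz.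
    apply not_lex_refine in Hxy as [Kyx Txy].
    apply not_lex_refine in Hyz as [Kzy Tyz].
    apply not_lex_refine; split; [lra |].
    intros Exz.
    assert (Exy : key x = key y) by lra.
    assert (Eyz : key y = key z) by lra.
    exact (Hneg x y z (Txy Exy) (Tyz Eyz)).
Qed.

End LexicographicRefinement.

Arguments lex_refine {X} key r x y.

(* Refining a projection by the value at any point of Theta is again a
   projection: a dominating pair either increases strictly at that point
   or is a tie there, in which case the original projection prefers it. *)
Lemma lex_refine_projection {Theta : Type} {D : (Theta -> R) -> Prop}
    (P : elt D -> elt D -> Prop) (t0 : Theta) :
  is_projection P ->
  is_projection (lex_refine (fun d : elt D => proj1_sig d t0) P).
Proof.
  intros [Hpref Hdom]; split.
  - exact (lex_refine_preference _ _ _ Hpref).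
  - intros d1 d2 Hd12.
    destruct (Rle_lt_or_eq_dec _ _ (proj1 Hd12 t0)) as [Hlt | Heq].
    + left; exact Hlt.
    + right; split; [exact Heq | exact (Hdom d1 d2 Hd12)].
Qed.

Lemma unique_projection_pointwise {Theta : Type} {D : (Theta -> R) -> Prop}
    (P : elt D -> elt D -> Prop) :
  is_projection P ->
  (forall Q, is_projection Q -> forall d1 d2, Q d1 d2 <-> P d1 d2) ->
  forall d1 d2, P d1 d2 -> forall t, proj1_sig d1 t <= proj1_sig d2 t.
Proof.
  intros HP Huniq d1 d2 H12 t0.
  apply Rnot_lt_le; intro Hlt.
  set (Q := lex_refine (fun d : elt D => proj1_sig d t0) P).
  assert (HQ21 : Q d2 d1) by (left; exact Hlt).
  apply (Huniq Q (lex_refine_projection P t0 HP)) in HQ21.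
  exact (proj1 (proj1 HP) d1 d2 H12 HQ21).
Qed.

Lemma elt_ext {Theta : Type} {D : (Theta -> R) -> Prop} (d1 d2 : elt D) :
  (forall t, proj1_sig d1 t = proj1_sig d2 t) -> d1 = d2.
Proof.
  destruct d1 as [f1 p1], d2 as [f2 p2]; simpl; intros Hpt.
  assert (f1 = f2) as <- by (apply functional_extensionality; exact Hpt).
  f_equal; apply proof_irrelevance.
Qed.

Theorem theorem1 (Theta : Type) (HTheta : inhabited Theta)
  (D : (Theta -> R) -> Prop) (P : elt D -> elt D -> Prop) :
  is_projection P ->
  (forall Q : elt D -> elt D -> Prop,
      is_projection Q -> forall d1 d2, Q d1 d2 <-> P d1 d2) ->
  forall d1 d2 : elt D, P d1 d2 <-> dominates d1 d2.
Proof.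
  intros HP Huniq d1 d2; split; [| apply (proj2 HP)].
  intros H12.
  pose proof (unique_projection_pointwise P HP Huniq d1 d2 H12) as Hle.
  split; [exact Hle |].
  apply NNPP; intros Hnone.
  assert (Heq : d1 = d2).
  { apply elt_ext; intros t.
    destruct (Rle_lt_or_eq_dec _ _ (Hle t)) as [Hlt | E]; [| exact E].
    exfalso; apply Hnone; exists t; exact Hlt. }
  subst d2; exact (preference_irrefl P (proj1 HP) d1 H12).
Qed.
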